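(* If $\nu>-1$ and $a,b\in[0,j_{\nu+1,1}]$, then $$|\mathcal{J}_\nu(a)-\mathcal{J}_\nu(b)|\ge |a-b|\sqrt{\mathcal{J}_\nu'(a)\,\mathcal{J}_\nu'(b)}.$$
   Context: For $\nu>-1$ define $\mathcal{J}_\nu:\mathbb{R}\to(-\infty,1]$ by $\mathcal{J}_\nu(x)=\sum_{n\ge0}\frac{(-1/4)^n}{(\nu+1)_n\, n!}x^{2n}$, equivalently $\mathcal{J}_\nu(x)=2^\nu\Gamma(\nu+1)x^{-\nu}J_\nu(x)$ for $x>0$, where $J_\nu$ is the Bessel function of the first kind and $(a)_n$ is the Pochhammer symbol. $j_{\mu,1}$ denotes the first positive zero of $J_\mu$. *)

From Stdlib Require Import Reals Lra ClassicalEpsilon Factorial.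
Open Scope R_scope.

Fixpoint poch (a : R) (n : nat) : R :=
  match n with
  | O => 1
  | S k => poch a k * (a + INR k)
  end.

Definition calJ_coef (nu : R) (n : nat) : R :=
  (-1/4) ^ n / (poch (nu + 1) n * INR (Factorial.fact n)).

(* calJ_nu(x) = sum_{n>=0} (-1/4)^n / ((nu+1)_n n!) x^(2n),
   i.e. the value of the power series sum calJ_coef nu n * (x^2)^n
   (which converges for every real x when nu > -1). *)
Definition calJ (nu x : R) : R :=
  epsilon (inhabits 0) (fun l => Pser (calJ_coef nu) (x ^ 2) l).

Definition first_pos_zero (f : R -> R) (j : R) : Prop :=
  0 < j /\ f j = 0 /\ (forall x, 0 < x < j -> f x <> 0).

From Stdlib Require Import Reals Lra Psatz ClassicalEpsilon Factorial.
From Coquelicot Require Import Coquelicot.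
Open Scope R_scope.

(* With mu = nu + 1 and P = calJ_mu one has calJ_nu' (x) = -x P(x) / (2 mu), so
   G = -2 mu calJ_nu is a primitive of psi(x) = x P(x), and the claim becomes
   |G(a) - G(b)| >= |a - b| sqrt(psi(a) psi(b)) on [0, j].

   1. Power series: calJ_nu is the entire series sum c_nu(n) (x^2)^n; termwise
      differentiation gives the derivative formula and the contiguous relation
      calJ_mu - calJ_(mu+1) + x^2/(4(mu+1)(mu+2)) calJ_(mu+2) = 0.
   2. Real analysis: if psi > 0 is log-concave on [a,b] and G' = psi, then
      G(b) - G(a) >= (b - a) sqrt(psi(a) psi(b)), by pairing t with a + b - t.
   3. ODE: for any P with P' = x g, g' = x h, P + (2mu+2) g + x^2 h = 0 and
      P(0) = 1, the energy P^2 + (2mu+2) P g + x^2 g^2 stays nonnegative, which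
      makes x P(x) log-concave; P > 0 before its first zero j. *)

Lemma poch_pos (a : R) (n : nat) : 0 < a -> 0 < poch a n.
Proof.
  intro Ha; induction n as [|n IH]; simpl; [lra|].
  apply Rmult_lt_0_compat; [exact IH|]. pose proof (pos_INR n); lra.
Qed.

Lemma poch_S_first (a : R) (n : nat) : poch a (S n) = a * poch (a + 1) n.
Proof.
  induction n as [|n IH]; [simpl; ring|].
  change (poch a (S (S n))) with (poch a (S n) * (a + INR (S n))).
  rewrite IH, S_INR. simpl. ring.
Qed.

Lemma fact_INR_pos (n : nat) : 0 < INR (fact n).
Proof. apply lt_0_INR, lt_O_fact. Qed.

Lemma calJ_coef_S (nu : R) (n : nat) : -1 < nu ->
  calJ_coef nu (S n) = calJ_coef nu n * (-1/4) / ((nu + 1 + INR n) * (INR n + 1)).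
Proof.
  intro Hnu. unfold calJ_coef.
  pose proof (poch_pos (nu + 1) n ltac:(lra)). pose proof (fact_INR_pos n).
  pose proof (pos_INR n).
  change (poch (nu + 1) (S n)) with (poch (nu + 1) n * (nu + 1 + INR n)).
  change (fact (S n)) with (S n * fact n)%nat. rewrite mult_INR, S_INR.
  simpl pow. field. repeat split; lra.
Qed.

Lemma calJ_coef_shift (nu : R) (n : nat) : -1 < nu ->
  calJ_coef (nu + 1) n = calJ_coef nu n * (nu + 1) / (nu + 1 + INR n).
Proof.
  intro Hnu. unfold calJ_coef.
  pose proof (poch_pos (nu + 1) n ltac:(lra)).
  pose proof (poch_pos (nu + 1 + 1) n ltac:(lra)).
  pose proof (fact_INR_pos n). pose proof (pos_INR n).
  assert (Hp : poch (nu + 1) n * (nu + 1 + INR n) = (nu + 1) * poch (nu + 1 + 1) n)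
    by (rewrite <- poch_S_first; reflexivity).
  replace (poch (nu + 1 + 1) n) with (poch (nu + 1) n * (nu + 1 + INR n) / (nu + 1))
    by (rewrite Hp; field; lra).
  field. repeat split; lra.
Qed.

Lemma calJ_coef_neq0 (nu : R) (n : nat) : -1 < nu -> calJ_coef nu n <> 0.
Proof.
  intro Hnu. unfold calJ_coef.
  pose proof (poch_pos (nu + 1) n ltac:(lra)). pose proof (fact_INR_pos n).
  apply Rmult_integral_contrapositive_currified.
  - apply pow_nonzero; lra.
  - apply Rinv_neq_0_compat, Rmult_integral_contrapositive_currified; lra.
Qed.

(* The series defining calJ_nu is entire (d'Alembert: ratios are O(1/n^2)). *)
Lemma calJ_coef_radius (nu : R) : -1 < nu -> CV_radius (calJ_coef nu) = p_infty.
Proof.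
  intro Hnu. apply CV_radius_infinite_DAlembert.
  - intro n; apply calJ_coef_neq0; exact Hnu.
  - apply is_lim_seq_le_le with (u := fun _ => 0)
      (w := fun n => / (4 * (nu + 1)) * / (INR n + 1)).
    + intro n. rewrite calJ_coef_S by exact Hnu.
      pose proof (calJ_coef_neq0 nu n Hnu). pose proof (pos_INR n).
      replace (calJ_coef nu n * (-1 / 4) / ((nu + 1 + INR n) * (INR n + 1)) / calJ_coef nu n)
        with (- / (4 * (nu + 1 + INR n) * (INR n + 1))) by (field; repeat split; lra).
      assert (Hd : 0 < 4 * (nu + 1 + INR n) * (INR n + 1))
        by (apply Rmult_lt_0_compat; lra).
      rewrite Rabs_Ropp, Rabs_pos_eq by (left; apply Rinv_0_lt_compat; exact Hd).
      split; [left; apply Rinv_0_lt_compat; exact Hd|].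
      rewrite <- Rinv_mult. apply Rinv_le_contravar; [apply Rmult_lt_0_compat; lra|].
      apply Rmult_le_compat_r; lra.
    + apply is_lim_seq_const.
    + replace (Finite 0) with (Rbar_mult (/ (4 * (nu + 1))) (Rbar_inv p_infty))
        by (simpl; f_equal; ring).
      apply is_lim_seq_scal_l, is_lim_seq_inv; [|discriminate].
      eapply (is_lim_seq_plus _ _ p_infty 1 p_infty);
        [apply is_lim_seq_INR | apply is_lim_seq_const | reflexivity].
Qed.

Lemma calJ_coef_ex_pseries (nu y : R) : -1 < nu -> ex_pseries (calJ_coef nu) y.
Proof. intro Hnu. apply CV_radius_inside. rewrite calJ_coef_radius by exact Hnu. exact I. Qed.

Lemma calJ_PSeries (nu x : R) : -1 < nu -> calJ nu x = PSeries (calJ_coef nu) (x ^ 2).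
Proof.
  intro Hnu. unfold calJ.
  destruct (calJ_coef_ex_pseries nu (x ^ 2) Hnu) as [l Hl].
  pose proof (epsilon_spec (inhabits 0) (fun l => Pser (calJ_coef nu) (x ^ 2) l)
    (ex_intro _ l (proj1 (is_pseries_Reals _ _ _) Hl))) as Hs.
  symmetry. apply is_pseries_unique, is_pseries_Reals, Hs.
Qed.

Lemma calJ_0 (nu : R) : -1 < nu -> calJ nu 0 = 1.
Proof.
  intro Hnu. rewrite calJ_PSeries by exact Hnu.
  replace (0 ^ 2) with 0 by ring. rewrite PSeries_0.
  unfold calJ_coef. simpl. field.
Qed.

Lemma PS_derive_calJ_coef (nu : R) (n : nat) : -1 < nu ->
  PS_derive (calJ_coef nu) n = - / (4 * (nu + 1)) * calJ_coef (nu + 1) n.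
Proof.
  intro Hnu. unfold PS_derive.
  rewrite calJ_coef_S, calJ_coef_shift, S_INR by exact Hnu.
  pose proof (pos_INR n). field. repeat split; lra.
Qed.

Lemma calJ_derive (nu x : R) : -1 < nu ->
  is_derive (calJ nu) x (- x / (2 * (nu + 1)) * calJ (nu + 1) x).
Proof.
  intro Hnu.
  apply (is_derive_ext (fun t => PSeries (calJ_coef nu) (t ^ 2))).
  { intro t. symmetry. apply calJ_PSeries, Hnu. }
  assert (Hout : is_derive (PSeries (calJ_coef nu)) (x ^ 2)
                   (PSeries (PS_derive (calJ_coef nu)) (x ^ 2))).
  { apply is_derive_PSeries. rewrite calJ_coef_radius by exact Hnu. exact I. }
  assert (Hin : is_derive (fun t : R => t ^ 2) x (2 * x)).
  { replace (2 * x) with (INR 2 * 1 * x ^ (pred 2)) by (simpl; ring).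
    apply (is_derive_pow (fun t => t)), (is_derive_id (K := R_AbsRing)). }
  pose proof (is_derive_comp _ _ x _ _ Hout Hin) as Hc.
  rewrite (PSeries_ext _ (PS_scal (- / (4 * (nu + 1))) (calJ_coef (nu + 1))))
    in Hc by (intro n; apply PS_derive_calJ_coef, Hnu).
  rewrite PSeries_scal, <- calJ_PSeries in Hc by lra.
  replace (- x / (2 * (nu + 1)) * calJ (nu + 1) x)
    with (scal (2 * x) (- / (4 * (nu + 1)) * calJ (nu + 1) x)); [exact Hc|].
  unfold scal; simpl; unfold mult; simpl. field. lra.
Qed.

Lemma calJ_coef_recurrence (mu : R) (n : nat) : -1 < mu ->
  calJ_coef mu n - calJ_coef (mu + 1) n
  + / (4 * (mu + 1) * (mu + 1 + 1)) * PS_incr_1 (calJ_coef (mu + 1 + 1)) n = 0.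
Proof.
  intro Hmu. destruct n as [|m].
  - unfold calJ_coef. simpl. unfold zero; simpl. field. lra.
  - simpl PS_incr_1.
    rewrite (calJ_coef_shift (mu + 1) m), (calJ_coef_shift mu m),
      (calJ_coef_shift mu (S m)), (calJ_coef_S mu m) by lra.
    pose proof (calJ_coef_neq0 mu m Hmu). pose proof (pos_INR m). rewrite S_INR.
    field. repeat split; lra.
Qed.

Lemma calJ_recurrence (mu x : R) : -1 < mu ->
  calJ mu x - calJ (mu + 1) x
  + x ^ 2 / (4 * (mu + 1) * (mu + 1 + 1)) * calJ (mu + 1 + 1) x = 0.
Proof.
  intro Hmu. rewrite !calJ_PSeries by lra.
  set (k := / (4 * (mu + 1) * (mu + 1 + 1))).
  replace (x ^ 2 / (4 * (mu + 1) * (mu + 1 + 1)) * PSeries (calJ_coef (mu + 1 + 1)) (x ^ 2))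
    with (k * PSeries (PS_incr_1 (calJ_coef (mu + 1 + 1))) (x ^ 2))
    by (rewrite PSeries_incr_1; unfold k, Rdiv; ring).
  rewrite <- PSeries_scal, <- PSeries_minus, <- PSeries_plus.
  - rewrite <- (PSeries_const_0 (x ^ 2)). apply PSeries_ext. intro n.
    unfold PS_plus, PS_minus, PS_opp, PS_scal, plus, opp, scal; simpl. unfold mult; simpl.
    rewrite <- (calJ_coef_recurrence mu n Hmu). fold k. ring.
  - apply ex_pseries_minus; apply calJ_coef_ex_pseries; lra.
  - apply ex_pseries_scal; [apply Rmult_comm|].
    apply ex_pseries_incr_1, calJ_coef_ex_pseries; lra.
  - apply calJ_coef_ex_pseries; lra.
  - apply calJ_coef_ex_pseries; lra.
Qed.

(* Product rule for real functions, with the values written with Rplus/Rmult. *)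
Lemma is_derive_Rmult (f g : R -> R) (x df dg : R) :
  is_derive f x df -> is_derive g x dg ->
  is_derive (fun t => f t * g t) x (df * g x + f x * dg).
Proof. intros Hf Hg. apply (is_derive_mult f g x df dg Hf Hg). intros; apply Rmult_comm. Qed.

Lemma is_derive_reflect (f : R -> R) (k x df : R) :
  is_derive f (k - x) df -> is_derive (fun t => f (k - t)) x (- df).
Proof.
  intro Hf.
  assert (Hk : is_derive (fun t : R => k - t) x (-1)) by (auto_derive; [exact I | ring]).
  pose proof (is_derive_comp f (fun t => k - t) x df _ Hf Hk) as Hc.
  replace (- df) with (scal (-1) df) by (unfold scal; simpl; unfold mult; simpl; ring).
  exact Hc.
Qed.

Lemma is_derive_value (f : R -> R) (x l l' : R) : is_derive f x l -> l = l' -> is_derive f x l'.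
Proof. intros H <-; exact H. Qed.

Lemma is_derive_continuity_pt (f : R -> R) (x l : R) : is_derive f x l -> continuity_pt f x.
Proof. intro H. apply derivable_continuous_pt. exists l. apply is_derive_Reals, H. Qed.

Lemma nondecreasing_of_derive_nonneg (f df : R -> R) (a b : R) : a <= b ->
  (forall x, a <= x <= b -> is_derive f x (df x)) ->
  (forall x, a <= x <= b -> 0 <= df x) -> f a <= f b.
Proof.
  intros Hab Hd Hp.
  destruct (MVT_gen f a b df) as [c [Hc Heq]]; cbv zeta in *;
    rewrite ?Rmin_left, ?Rmax_right in * by lra.
  - intros; apply Hd; lra.
  - intros; eapply is_derive_continuity_pt, Hd; lra.
  - pose proof (Hp c Hc). nra.
Qed.

Lemma smaller_value_left (f : R -> R) (c l a : R) : is_derive f c l -> 0 < l -> a < c ->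
  exists y, a <= y < c /\ f y < f c.
Proof.
  intros Hf Hl Hac. apply is_derive_Reals in Hf.
  destruct (Hf (l / 2) ltac:(lra)) as [d Hd].
  set (e := Rmin (d / 2) ((c - a) / 2)).
  assert (He : 0 < e) by (apply Rmin_glb_lt; pose proof (cond_pos d); lra).
  assert (He1 : e <= d / 2) by apply Rmin_l.
  assert (He2 : e <= (c - a) / 2) by apply Rmin_r.
  specialize (Hd (- e) ltac:(lra)).
  rewrite Rabs_Ropp, Rabs_pos_eq in Hd by lra.
  specialize (Hd ltac:(pose proof (cond_pos d); lra)).
  apply Rabs_def2 in Hd. destruct Hd as [_ Hd].
  set (q := (f (c + - e) - f c) / - e) in *.
  assert (Hq : f (c + - e) - f c = q * - e) by (unfold q; field; lra).
  exists (c + - e). split; [lra | nra].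
Qed.

Lemma two_sqrt_mult_le (u v : R) : 0 <= u -> 0 <= v -> 2 * sqrt (u * v) <= u + v.
Proof.
  intros Hu Hv. rewrite sqrt_mult by assumption.
  pose proof (Rle_0_sqr (sqrt u - sqrt v)) as Hsq. unfold Rsqr in Hsq.
  pose proof (sqrt_sqrt u Hu). pose proof (sqrt_sqrt v Hv). nra.
Qed.

(* The proof pairs t with a + b - t: log-concavity makes t |-> psi(t) psi(a+b-t)
   increase towards the midpoint, so psi(t) + psi(a+b-t) >= 2 sqrt(psi(a) psi(b)). *)
Section LogConcaveMean.
Variables (psi psi1 psi2 : R -> R) (a b : R).
Hypothesis a_le_b : a <= b.
Hypothesis psi_derive : forall x, a <= x <= b -> is_derive psi x (psi1 x).
Hypothesis psi1_derive : forall x, a <= x <= b -> is_derive psi1 x (psi2 x).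
Hypothesis psi_pos : forall x, a <= x <= b -> 0 < psi x.
Hypothesis psi_logconcave : forall x, a <= x <= b -> psi x * psi2 x <= psi1 x ^ 2.

Lemma log_derivative_nonincreasing (t s : R) : a <= t <= s -> s <= b ->
  psi1 s / psi s <= psi1 t / psi t.
Proof.
  intros Ht Hs.
  cut (- (psi1 t / psi t) <= - (psi1 s / psi s)); [lra|].
  apply (nondecreasing_of_derive_nonneg (fun y => - (psi1 y / psi y))
           (fun y => - ((psi2 y * psi y - psi1 y * psi1 y) / psi y ^ 2))); [lra| |].
  - intros x Hx. apply (is_derive_opp (fun y => psi1 y / psi y)), (is_derive_div psi1 psi);
      [apply psi1_derive | apply psi_derive | pose proof (psi_pos x)]; lra.
  - intros x Hx. pose proof (psi_pos x ltac:(lra)). pose proof (psi_logconcave x ltac:(lra)).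
    assert (0 < psi x ^ 2) by (apply pow_lt; lra).
    apply Ropp_0_ge_le_contravar, Rle_ge. unfold Rdiv.
    apply Rmult_le_0_r; [simpl in *; nra | left; apply Rinv_0_lt_compat; lra].
Qed.

Lemma reflected_product_ge (t : R) : a <= t <= b -> psi a * psi b <= psi t * psi (a + b - t).
Proof.
  set (Q := fun t => psi t * psi (a + b - t)).
  assert (HQ : forall u, a <= u <= (a + b) / 2 -> Q a <= Q u).
  { intros u Hu.
    apply (nondecreasing_of_derive_nonneg Q
             (fun y => psi1 y * psi (a + b - y) + psi y * - psi1 (a + b - y))); [lra| |].
    - intros x Hx. apply (is_derive_Rmult psi (fun y => psi (a + b - y)));
        [apply psi_derive | apply is_derive_reflect, psi_derive]; lra.
    - intros x Hx.
      pose proof (psi_pos x ltac:(lra)). pose proof (psi_pos (a + b - x) ltac:(lra)).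
      pose proof (log_derivative_nonincreasing x (a + b - x) ltac:(lra) ltac:(lra)).
      replace (psi1 x * psi (a + b - x) + psi x * - psi1 (a + b - x))
        with (psi x * psi (a + b - x)
              * (psi1 x / psi x - psi1 (a + b - x) / psi (a + b - x))) by (field; lra).
      apply Rmult_le_pos; nra. }
  assert (HQa : Q a = psi a * psi b) by (unfold Q; do 2 f_equal; ring).
  intro Ht. rewrite <- HQa. destruct (Rle_or_lt t ((a + b) / 2)).
  - apply HQ; lra.
  - replace (psi t * psi (a + b - t)) with (Q (a + b - t))
      by (unfold Q; replace (a + b - (a + b - t)) with t by ring; ring).
    apply HQ; lra.
Qed.

Lemma reflected_sum_ge (t : R) : a <= t <= b ->
  2 * sqrt (psi a * psi b) <= psi t + psi (a + b - t).
Proof.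
  intro Ht. pose proof (psi_pos t Ht). pose proof (psi_pos (a + b - t) ltac:(lra)).
  apply Rle_trans with (2 * sqrt (psi t * psi (a + b - t))).
  - apply Rmult_le_compat_l; [lra|]. apply sqrt_le_1_alt, reflected_product_ge, Ht.
  - apply two_sqrt_mult_le; lra.
Qed.

Lemma logconcave_mean_ge (G : R -> R) : (forall x, a <= x <= b -> is_derive G x (psi x)) ->
  G b - G a >= (b - a) * sqrt (psi a * psi b).
Proof.
  intro HG. set (S := sqrt (psi a * psi b)).
  set (H := fun t => G t - G (a + b - t) - 2 * S * t).
  assert (HH : H a <= H b).
  { apply (nondecreasing_of_derive_nonneg H (fun t => psi t - - psi (a + b - t) - 2 * S)); [lra| |].
    - intros x Hx.
      apply (is_derive_minus (fun t => G t - G (a + b - t)) (fun t => 2 * S * t)).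
      + apply (is_derive_minus G (fun t => G (a + b - t)));
          [apply HG, Hx | apply is_derive_reflect, HG; lra].
      + apply (is_derive_value _ _ (2 * S * 1)); [|ring].
        apply (is_derive_scal (fun t => t)), (is_derive_id (K := R_AbsRing)).
    - intros x Hx. pose proof (reflected_sum_ge x Hx) as Hs. fold S in Hs. lra. }
  unfold H in HH. replace (a + b - a) with b in HH by ring.
  replace (a + b - b) with a in HH by ring. lra.
Qed.

End LogConcaveMean.

(* For P = calJ_mu this is the
   Bessel equation written for the normalized function. *)
Section ContiguousSystem.
Variables (mu j : R) (P g h : R -> R).
Hypothesis mu_pos : 0 < mu.
Hypothesis P_derive : forall x, is_derive P x (x * g x).
Hypothesis g_derive : forall x, is_derive g x (x * h x).
Hypothesis contiguous : forall x, P x + (2 * mu + 2) * g x + x ^ 2 * h x = 0.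
Hypothesis P_at_0 : P 0 = 1.
Hypothesis P_neq0 : forall x, 0 < x < j -> P x <> 0.
Hypothesis P_at_j : P j = 0.

(* An energy functional; x N'(x) = -(2mu+2) N(x) + 2 x^2 g(x)^2 forces N >= 0. *)
Definition energy (x : R) : R := P x ^ 2 + (2 * mu + 2) * P x * g x + x ^ 2 * g x ^ 2.

Definition energy' (x : R) : R :=
  2 * P x * (x * g x) + (2 * mu + 2) * (x * g x * g x + P x * (x * h x))
  + 2 * x * g x ^ 2 + x ^ 2 * (2 * g x * (x * h x)).

Lemma energy_derive (x : R) : is_derive energy x (energy' x).
Proof.
  unfold energy, energy'.
  assert (Hx2 : is_derive (fun t : R => t ^ 2) x (2 * x)) by (auto_derive; [exact I | ring]).
  pose proof (is_derive_Rmult P P x _ _ (P_derive x) (P_derive x)) as dP2.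
  pose proof (is_derive_Rmult (fun t => (2 * mu + 2) * P t) g x _ _
    (is_derive_Rmult (fun _ => 2 * mu + 2) P x _ _ (is_derive_const _ x) (P_derive x))
    (g_derive x)) as dPg.
  pose proof (is_derive_Rmult (fun t => t ^ 2) (fun t => g t * g t) x _ _ Hx2
    (is_derive_Rmult g g x _ _ (g_derive x) (g_derive x))) as dxg.
  apply (is_derive_ext (fun t => P t * P t + (2 * mu + 2) * P t * g t + t ^ 2 * (g t * g t)));
    [intro t; simpl; ring|].
  apply (is_derive_value _ _ _ _
    (is_derive_plus _ _ x _ _ (is_derive_plus _ _ x _ _ dP2 dPg) dxg)).
  unfold plus, mult, zero; simpl. ring.
Qed.

Lemma energy_derive_identity (x : R) :
  x * energy' x = - (2 * mu + 2) * energy x + 2 * x ^ 2 * g x ^ 2.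
Proof.
  unfold energy, energy'. pose proof (contiguous x) as Hc.
  transitivity (- (2 * mu + 2) * (P x ^ 2 + (2 * mu + 2) * P x * g x + x ^ 2 * g x ^ 2)
                + 2 * x ^ 2 * g x ^ 2
                + ((2 * mu + 2) * P x + 2 * x ^ 2 * g x) * (P x + (2 * mu + 2) * g x + x ^ 2 * h x));
    [ring|]. rewrite Hc. ring.
Qed.

(* N(0) = P(0) (P(0) + (2mu+2) g(0)) = 0 by the equation at x = 0. *)
Lemma energy_0 : energy 0 = 0.
Proof.
  unfold energy. pose proof (contiguous 0) as Hc. rewrite P_at_0 in *.
  replace (0 ^ 2 * h 0) with 0 in Hc by ring. nra.
Qed.

(* At a point where N is negative the identity gives N' > 0, so a negative
   minimum of N on [0,x] is impossible. *)
Lemma energy_nonneg (x : R) : 0 <= x -> 0 <= energy x.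
Proof.
  intro Hx. destruct (Rle_or_lt 0 (energy x)) as [|Hneg]; [assumption|]. exfalso.
  destruct (continuity_ab_min energy 0 x Hx) as [m [Hmin Hm]].
  { intros; eapply is_derive_continuity_pt, energy_derive. }
  assert (Hnm : energy m < 0) by (pose proof (Hmin x ltac:(lra)); lra).
  assert (Hm0 : 0 < m) by (destruct (Req_dec m 0) as [->|]; [rewrite energy_0 in Hnm|]; lra).
  assert (Hd : 0 < energy' m).
  { pose proof (energy_derive_identity m). assert (0 < m * energy' m) by nra. nra. }
  destruct (smaller_value_left energy m (energy' m) 0 (energy_derive m) Hd Hm0)
    as [y [Hy Hlt]].
  pose proof (Hmin y ltac:(lra)). lra.
Qed.

(* P starts at 1 and does not vanish before j. *)
Lemma P_pos (x : R) : 0 <= x < j -> 0 < P x.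
Proof.
  intro Hx. destruct (Rlt_or_le 0 (P x)) as [|Hle]; [assumption|]. exfalso.
  assert (Hx0 : 0 < x) by (destruct (Req_dec x 0) as [->|]; [rewrite P_at_0 in Hle|]; lra).
  destruct (IVT_gen P 0 x 0) as [z [Hz HPz]].
  - intro t. eapply is_derive_continuity_pt, P_derive.
  - rewrite P_at_0, Rmin_right, Rmax_left by lra. lra.
  - rewrite Rmin_left, Rmax_right in Hz by lra.
    destruct (Req_dec z 0) as [->|]; [rewrite P_at_0 in HPz; lra|].
    apply (P_neq0 z); [lra | exact HPz].
Qed.

(* psi(x) = x P(x) is log-concave on [0,oo); psi' = P + x^2 g, psi'' = 3xg + x^3 h. *)
Lemma xP_logconcave (x : R) : 0 <= x ->
  x * P x * (3 * x * g x + x ^ 3 * h x) <= (P x + x ^ 2 * g x) ^ 2.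
Proof.
  intro Hx. pose proof (energy_nonneg x Hx) as HN. unfold energy in HN.
  assert (Hid : x * P x * (3 * x * g x + x ^ 3 * h x) - (P x + x ^ 2 * g x) ^ 2
    = - (x ^ 2 * P x ^ 2 + (2 * mu + 1) * x ^ 2 * P x * g x + P x ^ 2 + x ^ 4 * g x ^ 2)
      + x ^ 2 * P x * (P x + (2 * mu + 2) * g x + x ^ 2 * h x)) by ring.
  rewrite contiguous, Rmult_0_r, Rplus_0_r in Hid.
  set (p := P x) in *. set (q := g x) in *.
  destruct (Rle_or_lt 0 (p * q)).
  - assert (0 <= x ^ 2 * (p * q)) by (apply Rmult_le_pos; nra). nra.
  - assert (0 <= x ^ 2 * (p ^ 2 + (2 * mu + 2) * p * q + x ^ 2 * q ^ 2))
      by (apply Rmult_le_pos; nra).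
    assert (0 <= x ^ 2 * - (p * q)) by (apply Rmult_le_pos; nra). nra.
Qed.

Lemma xP_derive (x : R) : is_derive (fun t => t * P t) x (P x + x ^ 2 * g x).
Proof.
  apply (is_derive_value _ _ _ _
    (is_derive_Rmult (fun t => t) P x _ _ (is_derive_id (K := R_AbsRing) x) (P_derive x))).
  unfold one, plus, mult; simpl; ring.
Qed.

Lemma xP_derive2 (x : R) :
  is_derive (fun t => P t + t ^ 2 * g t) x (3 * x * g x + x ^ 3 * h x).
Proof.
  apply (is_derive_value _ _ _ _ (is_derive_plus _ _ x _ _ (P_derive x)
    (is_derive_Rmult (fun t => t ^ 2) g x _ _
       (is_derive_pow (fun t => t) 2 x _ (is_derive_id (K := R_AbsRing) x)) (g_derive x)))).
  unfold one, plus, mult; simpl; ring.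
Qed.

(* The gap inequality for a <= b in [0,j]: on the degenerate ends (a = 0 or
   b = j) the right side vanishes; otherwise [a,b] lies in (0,j), where x P(x)
   is positive and log-concave. *)
Lemma primitive_xP_gap_ordered (G : R -> R) (a b : R) :
  (forall x, is_derive G x (x * P x)) -> 0 <= a <= b -> b <= j ->
  Rabs (G b - G a) >= (b - a) * sqrt (a * P a * (b * P b)).
Proof.
  intros HG Ha Hb.
  destruct (Req_dec a 0) as [->|Ha0];
    [rewrite !Rmult_0_l, sqrt_0, Rmult_0_r; apply Rle_ge, Rabs_pos|].
  destruct (Req_dec b j) as [->|Hbj];
    [rewrite P_at_j, !Rmult_0_r, sqrt_0, Rmult_0_r; apply Rle_ge, Rabs_pos|].
  apply Rle_ge, Rle_trans with (G b - G a); [apply Rge_le | apply Rle_abs].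
  apply (logconcave_mean_ge (fun x => x * P x) (fun x => P x + x ^ 2 * g x)
           (fun x => 3 * x * g x + x ^ 3 * h x)); [lra | | | | |].
  - intros x _. apply xP_derive.
  - intros x _. apply xP_derive2.
  - intros x Hx. apply Rmult_lt_0_compat; [|apply P_pos]; lra.
  - intros x Hx. apply xP_logconcave; lra.
  - intros x _. apply HG.
Qed.

Lemma primitive_xP_gap (G : R -> R) (a b : R) :
  (forall x, is_derive G x (x * P x)) -> 0 <= a <= j -> 0 <= b <= j ->
  Rabs (G a - G b) >= Rabs (a - b) * sqrt (a * P a * (b * P b)).
Proof.
  intros HG Ha Hb. destruct (Rle_or_lt a b).
  - rewrite (Rabs_minus_sym a b), (Rabs_pos_eq (b - a)), Rabs_minus_sym by lra.
    apply primitive_xP_gap_ordered; [exact HG | lra | lra].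
  - rewrite (Rabs_pos_eq (a - b)), (Rmult_comm (a * P a)) by lra.
    apply primitive_xP_gap_ordered; [exact HG | lra | lra].
Qed.

End ContiguousSystem.

(* The companions of P = calJ_mu in the system P' = x g, g' = x h. *)
Definition calJ_g (mu x : R) : R := - / (2 * (mu + 1)) * calJ (mu + 1) x.
Definition calJ_h (mu x : R) : R := / (4 * (mu + 1) * (mu + 1 + 1)) * calJ (mu + 1 + 1) x.

Lemma calJ_derive_g (mu x : R) : -1 < mu -> is_derive (calJ mu) x (x * calJ_g mu x).
Proof.
  intro Hmu. apply (is_derive_value _ _ _ _ (calJ_derive mu x Hmu)).
  unfold calJ_g. field. lra.
Qed.

Lemma calJ_g_derive (mu x : R) : -1 < mu -> is_derive (calJ_g mu) x (x * calJ_h mu x).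
Proof.
  intro Hmu. unfold calJ_g.
  apply (is_derive_value _ _ _ _ (is_derive_scal _ _ _ _ (calJ_derive (mu + 1) x ltac:(lra)))).
  unfold calJ_h, scal; simpl; unfold mult; simpl. field. lra.
Qed.

Lemma calJ_contiguous (mu x : R) : -1 < mu ->
  calJ mu x + (2 * mu + 2) * calJ_g mu x + x ^ 2 * calJ_h mu x = 0.
Proof.
  intro Hmu. rewrite <- (calJ_recurrence mu x Hmu). unfold calJ_g, calJ_h. field. lra.
Qed.

Lemma calJ_primitive_gap (mu j : R) (G : R -> R) (a b : R) : 0 < mu ->
  first_pos_zero (calJ mu) j -> (forall x, is_derive G x (x * calJ mu x)) ->
  0 <= a <= j -> 0 <= b <= j ->
  Rabs (G a - G b) >= Rabs (a - b) * sqrt (a * calJ mu a * (b * calJ mu b)).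
Proof.
  intros Hmu [_ [Hj Hnz]] HG.
  apply (primitive_xP_gap mu j (calJ mu) (calJ_g mu) (calJ_h mu)); try assumption.
  - intro x; apply calJ_derive_g; lra.
  - intro x; apply calJ_g_derive; lra.
  - intro x; apply calJ_contiguous; lra.
  - apply calJ_0; lra.
Qed.

Theorem corollary2 (nu j a b da db : R) :
  -1 < nu ->
  first_pos_zero (calJ (nu + 1)) j ->
  0 <= a <= j -> 0 <= b <= j ->
  derivable_pt_lim (calJ nu) a da ->
  derivable_pt_lim (calJ nu) b db ->
  Rabs (calJ nu a - calJ nu b) >= Rabs (a - b) * sqrt (da * db).
Proof.
  intros Hnu Hj Ha Hb Hda Hdb.
  set (mu := nu + 1) in *. set (k := 2 * mu).
  assert (Hk : 0 < k) by (unfold k, mu; lra).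
  assert (HG : forall x, is_derive (fun t => - k * calJ nu t) x (x * calJ mu x)).
  { intro x. apply (is_derive_value _ _ _ _ (is_derive_scal _ _ _ _ (calJ_derive nu x Hnu))).
    unfold scal; simpl; unfold mult; simpl. fold mu k. field. lra. }
  assert (Hd : forall x dx, derivable_pt_lim (calJ nu) x dx -> dx = - / k * (x * calJ mu x)).
  { intros x dx Hdx. eapply uniqueness_limite; [exact Hdx|].
    apply is_derive_Reals, (is_derive_value _ _ _ _ (calJ_derive nu x Hnu)).
    fold mu k. field. lra. }
  pose proof (calJ_primitive_gap mu j _ a b ltac:(unfold mu; lra) Hj HG Ha Hb) as Hgap.
  (* Rescale: sqrt(da db) = sqrt(aP(a) bP(b)) / k and |G a - G b| = k |calJ_nu a - calJ_nu b|. *)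
  rewrite (Hd a da Hda), (Hd b db Hdb).
  replace (- / k * (a * calJ mu a) * (- / k * (b * calJ mu b)))
    with ((/ k) ^ 2 * (a * calJ mu a * (b * calJ mu b))) by ring.
  rewrite sqrt_mult_alt, sqrt_pow2 by (try apply pow2_ge_0; left; apply Rinv_0_lt_compat, Hk).
  cbv beta in Hgap.
  replace (- k * calJ nu a - - k * calJ nu b) with (- k * (calJ nu a - calJ nu b)) in Hgap
    by ring.
  rewrite Rabs_mult, Rabs_Ropp, (Rabs_pos_eq k) in Hgap by lra.
  apply Rle_ge, (Rmult_le_reg_l k); [exact Hk|]. apply Rge_le in Hgap.
  replace (k * (Rabs (a - b) * (/ k * sqrt (a * calJ mu a * (b * calJ mu b)))))
    with (Rabs (a - b) * sqrt (a * calJ mu a * (b * calJ mu b))) by (field; lra).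
  exact Hgap.
Qed.
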